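(* Let $K=\mathbb{Q}(\sqrt{d})$, where $d>1$ is square-free and $d=m^2+r$ with $m,r$ integers, $m>0$, $-m<r\le m$ and $4m\equiv 0 \pmod r$ (i.e. $K$ is of Richaud–Degert type). Suppose that either $d\equiv 2,3 \pmod 4$, or $d\equiv 1\pmod 4$ and $m$ is odd. If $K$ is not unit reducible, then $n_K=2$.
   Context: For a totally real number field $K$ with ring of integers $\mathcal{O}_K$ and unit group $\mathcal{O}_K^\times$, let $K_{>>0}$ be the set of totally positive elements. For $a\in K_{>>0}$, $\mu(a)=\min_{x\in\mathcal{O}_K\setminus\{0\}}\mathrm{Tr}_{K/\mathbb{Q}}(ax^2)$ and $\mathcal{M}(a)=\{x\in\mathcal{O}_K:\mathrm{Tr}_{K/\mathbb{Q}}(ax^2)=\mu(a)\}$. $K$ is unit reducible if $\mu(a)=\min_{u\in\mathcal{O}_K^\times}\mathrm{Tr}_{K/\mathbb{Q}}(au^2)$ for all $a\in K_{>>0}$. The unary form $ax^2$ is perfect if $a$ is the only $b\in K_{>>0}$ with $\mathrm{Tr}_{K/\mathbb{Q}}(bv^2)=\mu(a)$ for all $v\in\mathcal{M}(a)$. Forms $ax^2,bx^2$ are equivalent if $b=au^2$ for some $u\in\mathcal{O}_K^\times$, homothetic if $b=\lambda a$ with rational $\lambda>0$; $n_K$ is the number of classes of perfect unary forms up to equivalence and homothety. *)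

(* The real quadratic field K = Q(sqrt d) is modelled concretely:
   an element a + b*sqrt(d) (a b : rat) is the pair (a, b). *)
From mathcomp Require Import all_boot all_order all_algebra.
Set Implicit Arguments. Unset Strict Implicit. Unset Printing Implicit Defensive.
Import Order.TTheory GRing.Theory Num.Theory.
Local Open Scope ring_scope.

Definition qf := (rat * rat)%type.

Section QuadField.
Variable d : nat.

Definition qadd (x y : qf) : qf := (x.1 + y.1, x.2 + y.2).
Definition qmul (x y : qf) : qf :=
  (x.1 * y.1 + d%:R * (x.2 * y.2), x.1 * y.2 + x.2 * y.1).
Definition qscale (l : rat) (x : qf) : qf := (l * x.1, l * x.2).
Definition qsq (x : qf) : qf := qmul x x.
Definition qzero : qf := (0, 0).
Definition qone : qf := (1, 0).

Definition qtr (x : qf) : rat := 2 * x.1.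
Definition qnorm (x : qf) : rat := x.1 ^+ 2 - d%:R * x.2 ^+ 2.

(* ring of integers: x is an algebraic integer iff its characteristic polynomial
   X^2 - Tr(x) X + N(x) has integer coefficients *)
Definition inOK (x : qf) : Prop := qtr x \is a Num.int /\ qnorm x \is a Num.int.

Definition isunit (u : qf) : Prop := inOK u /\ exists v, inOK v /\ qmul u v = qone.

(* totally positive: both real conjugates a + b sqrt d, a - b sqrt d are > 0,
   i.e. their sum (trace) and product (norm) are > 0 *)
Definition totpos (a : qf) : Prop := 0 < qtr a /\ 0 < qnorm a.

Definition is_mu (a : qf) (m : rat) : Prop :=
  (exists x, inOK x /\ x <> qzero /\ qtr (qmul a (qsq x)) = m) /\
  (forall x, inOK x -> x <> qzero -> m <= qtr (qmul a (qsq x))).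

Definition in_min_vectors (a : qf) (m : rat) (x : qf) : Prop :=
  inOK x /\ qtr (qmul a (qsq x)) = m.

Definition unit_reducible : Prop :=
  forall a, totpos a -> forall m, is_mu a m ->
    exists u, isunit u /\ qtr (qmul a (qsq u)) = m.

(* the unary form a x^2 is perfect *)
Definition perfect (a : qf) : Prop :=
  totpos a /\ exists m, is_mu a m /\
    forall b, totpos b ->
      (forall v, in_min_vectors a m v -> qtr (qmul b (qsq v)) = m) -> b = a.

Definition equiv_hom (a b : qf) : Prop :=
  exists u lam, isunit u /\ 0 < lam /\ b = qscale lam (qmul a (qsq u)).

Definition nK_eq2 : Prop :=
  exists a1 a2, perfect a1 /\ perfect a2 /\ ~ equiv_hom a1 a2 /\
    forall a, perfect a -> equiv_hom a1 a \/ equiv_hom a2 a.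

End QuadField.

From mathcomp Require Import all_boot all_order all_algebra.
From mathcomp Require Import ring lra zify.
Set Implicit Arguments. Unset Strict Implicit. Unset Printing Implicit Defensive.
Import Order.TTheory GRing.Theory Num.Theory.
Local Open Scope ring_scope.

(* Write beta = t/2 + b2 sqrt d with d b2^2 = (t/2)^2 + rho, so that beta^2 = t beta + rho, and
   suppose that O_K = Z[beta], that rho divides t and that 2 |rho| <= t; both cases of the theorem
   are of this shape, with (t, rho, b2) = (2m, r, 1) and (m, r/4, 1/2) respectively. Then
   eps = 1 + (t/rho) beta is a unit of norm 1 with beta^2 = rho eps. The form N1 defined by
   Tr(N1 (s + q beta)^2) = t (s^2 + q^2) + 2 (1 - rho) s q has minimum t, attained at 1 and at beta,
   and, when |rho| <> 1, at no unit other than -1 and 1. Let N0 be the conjugate of N1, and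
   N2 = N0 eps'^2, N3 = N1 eps'^2 where eps' = 1/eps is the conjugate of eps. Up to multiplication
   by powers of eps^2, every totally positive element lies in one of the cones [N1, N2] and
   (N2, N3). The two edges of the first cone share the minimal vector beta, those of the second
   the minimal vector eps, so no form inside a cone is perfect and every form in a cone attains
   its minimum at beta or at eps. If |rho| = 1, then beta is a unit and K is unit reducible;
   otherwise the perfect forms are, up to equivalence and homothety, N1 and N2 ~ N0, and these
   two are not equivalent. *)

(** * Arithmetic in Q(sqrt d) *)

Definition qconj (x : qf) : qf := (x.1, - x.2).
Definition qdet (c e : qf) : rat := c.2 * e.1 - c.1 * e.2.

Notation qtrf d a x := (qtr (qmul d a (qsq d x))).

Ltac qf_ring :=
  repeat match goal with x : qf |- _ => destruct x end;
  rewrite /qsq /qmul /qadd /qscale /qone /qzero /qtr /qnorm /qconj /qdet /=;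
  try congr pair; ring.

Section QuadraticField.
Variable d : nat.
Local Notation D := (d%:R : rat).
Local Notation qm := (qmul d).

Definition qpow (x : qf) (n : nat) : qf := iter n (qm x) qone.

Lemma qmulC x y : qm x y = qm y x. Proof. qf_ring. Qed.
Lemma qmulA x y z : qm x (qm y z) = qm (qm x y) z. Proof. qf_ring. Qed.
Lemma qmul1q x : qm qone x = x. Proof. qf_ring. Qed.
Lemma qmulq1 x : qm x qone = x. Proof. qf_ring. Qed.
Lemma qmulq0 x : qm x qzero = qzero. Proof. qf_ring. Qed.
Lemma qmulACA x y z w : qm (qm x y) (qm z w) = qm (qm x z) (qm y w). Proof. qf_ring. Qed.
Lemma qadd_scale0l x y : qadd (qscale 0 x) y = y. Proof. qf_ring. Qed.
Lemma qadd_scale0r x y : qadd x (qscale 0 y) = x. Proof. qf_ring. Qed.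
Lemma qmulZl l x y : qm (qscale l x) y = qscale l (qm x y). Proof. qf_ring. Qed.
Lemma qsqM x y : qsq d (qm x y) = qm (qsq d x) (qsq d y). Proof. qf_ring. Qed.
Lemma qsq1 : qsq d qone = qone. Proof. qf_ring. Qed.
Lemma qconjM x y : qconj (qm x y) = qm (qconj x) (qconj y). Proof. qf_ring. Qed.
Lemma qconjK x : qconj (qconj x) = x. Proof. qf_ring. Qed.
Lemma qconj_eq0 x : qconj x = qzero -> x = qzero.
Proof. by move=> x0; rewrite -[x]qconjK x0; qf_ring. Qed.
Lemma qconj_sq x : qconj (qsq d x) = qsq d (qconj x). Proof. qf_ring. Qed.
Lemma qmul_conj x : qm x (qconj x) = (qnorm d x, 0). Proof. qf_ring. Qed.
Lemma qnormM x y : qnorm d (qm x y) = qnorm d x * qnorm d y. Proof. qf_ring. Qed.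
Lemma qnorm_conj x : qnorm d (qconj x) = qnorm d x. Proof. qf_ring. Qed.
Lemma qnorm_sq x : qnorm d (qsq d x) = qnorm d x ^+ 2. Proof. qf_ring. Qed.
Lemma qtr_conj x : qtr (qconj x) = qtr x. Proof. qf_ring. Qed.

Lemma qone_neq0 : qone <> qzero.
Proof. by case=> /eqP; rewrite oner_eq0. Qed.

Lemma qmul_cancel u v x : qm u v = qone -> qm u (qm v x) = x.
Proof. by move=> uv; rewrite qmulA uv qmul1q. Qed.

Lemma qmul_unit_neq0 u v : qm u v = qone -> u <> qzero.
Proof. by move=> uv u0; move: uv; rewrite u0 qmulC qmulq0 => -[/eqP]; rewrite eq_sym oner_eq0. Qed.

Lemma qmul_eq0 u v x : qm u v = qone -> qm u x = qzero -> x = qzero.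
Proof. by move=> uv ux0; rewrite -(@qmul_cancel v u x) ?ux0 ?qmulq0 // qmulC. Qed.

Lemma qtrf_mulsq a u x : qtrf d (qm a (qsq d u)) x = qtrf d a (qm u x).
Proof. qf_ring. Qed.
Lemma qtrf_conj a x : qtrf d (qconj a) x = qtrf d a (qconj x).
Proof. qf_ring. Qed.
Lemma qtrfD l c m e x :
  qtrf d (qadd (qscale l c) (qscale m e)) x = l * qtrf d c x + m * qtrf d e x.
Proof. qf_ring. Qed.
Lemma qtrfZ l c x : qtrf d (qscale l c) x = l * qtrf d c x.
Proof. qf_ring. Qed.
Lemma qtrf1 a : qtrf d a qone = qtr a.
Proof. qf_ring. Qed.
Lemma qtrf0 a : qtrf d a qzero = 0.
Proof. qf_ring. Qed.

Lemma qdetC c e : qdet c e = - qdet e c. Proof. qf_ring. Qed.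
Lemma qdetxx c : qdet c c = 0. Proof. qf_ring. Qed.
Lemma qdet_mulsq c e u :
  qdet (qm c (qsq d u)) (qm e (qsq d u)) = qnorm d u ^+ 2 * qdet c e.
Proof. qf_ring. Qed.
Lemma qdetDl c l x m y :
  qdet (qadd (qscale l x) (qscale m y)) c = l * qdet x c + m * qdet y c.
Proof. qf_ring. Qed.
Lemma qdetDr c l x m y :
  qdet c (qadd (qscale l x) (qscale m y)) = l * qdet c x + m * qdet c y.
Proof. qf_ring. Qed.
Lemma qdet_cycle p q r : qdet q r * p.1 + qdet r p * q.1 + qdet p q * r.1 = 0.
Proof. qf_ring. Qed.

Lemma qdet_coord a c e : qdet c e != 0 ->
  a = qadd (qscale (qdet a e / qdet c e) c) (qscale (qdet c a / qdet c e) e).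
Proof.
move=> ce0; repeat match goal with x : qf |- _ => destruct x end.
by move: ce0; rewrite /qadd /qscale /qdet /= => ce0; congr pair; field.
Qed.

Lemma qdet_qtrf c e y :
  qtr c * qtrf d e y - qtrf d c y * qtr e = - (4 * D) * qdet c e * (qsq d y).2.
Proof. qf_ring. Qed.

Lemma qpowS x n : qpow x n.+1 = qm x (qpow x n). Proof. by []. Qed.

Lemma qpowD x n k : qpow x (n + k) = qm (qpow x n) (qpow x k).
Proof. by elim: n => [|n IH]; rewrite ?add0n ?qmul1q // addSn !qpowS IH qmulA. Qed.

Lemma qpowMn x y n : qpow (qm x y) n = qm (qpow x n) (qpow y n).
Proof. by elim: n => [|n IH]; [rewrite qmul1q | rewrite !qpowS IH qmulACA]. Qed.

Lemma qpow_conj x n : qconj (qpow x n) = qpow (qconj x) n.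
Proof. by elim: n => [|n IH]; [qf_ring | rewrite !qpowS qconjM IH]. Qed.

Lemma qpow_sq x n : qsq d (qpow x n) = qpow (qsq d x) n.
Proof. by elim: n => [|n IH]; [exact: qsq1 | rewrite !qpowS qsqM IH]. Qed.

Lemma qpow_inv x y n : qm x y = qone -> qm (qpow x n) (qpow y n) = qone.
Proof. by move=> xy; rewrite -qpowMn xy; elim: n => // n IH; rewrite qpowS IH qmul1q. Qed.

Lemma qnorm_pow x n : qnorm d (qpow x n) = qnorm d x ^+ n.
Proof. by elim: n => [|n IH]; [qf_ring | rewrite qpowS qnormM IH exprS]. Qed.

Lemma inOK_one : inOK d qone.
Proof. by split; rewrite /qtr /qnorm /= ?expr0n /= ?mulr0 ?subr0 ?expr1n ?mulr1 ?intr_int. Qed.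

Lemma inOK_conj x : inOK d x -> inOK d (qconj x).
Proof. by case=> ? ?; split; rewrite ?qtr_conj ?qnorm_conj. Qed.

Lemma qnorm_unit u v : inOK d u -> inOK d v -> qm u v = qone ->
  qnorm d u = 1 \/ qnorm d u = -1.
Proof.
move=> [_ /intrP[a Nu]] [_ /intrP[b Nv]] uv.
have ab1 : a * b = 1.
  apply: (intr_inj (R := rat)); rewrite intrM -Nu -Nv -qnormM uv.
  by rewrite /qnorm /=; ring.
have a_unit : `|a| * `|b| = 1 by rewrite -normrM ab1.
have b_ge1 : 1 <= `|b| by nia.
have : a = 1 \/ a = -1 by nia.
by rewrite Nu => -[->|->]; [left | right].
Qed.

Lemma qnorm_unit_neq0 u : isunit d u -> qnorm d u != 0.
Proof.
case=> u_int [v [v_int uv]].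
by case: (qnorm_unit u_int v_int uv) => ->; rewrite ?oppr_eq0 oner_eq0.
Qed.

Lemma isunit_qmul_one u v : inOK d u -> inOK d v -> qm u v = qone -> isunit d u /\ isunit d v.
Proof. by move=> u_int v_int uv; split; split=> //; [exists v | exists u; rewrite qmulC]. Qed.

Lemma isunit_neq0 u : isunit d u -> u <> qzero.
Proof. by case=> _ [v [_ uv]]; exact: qmul_unit_neq0 uv. Qed.

Lemma is_mu_unique a m1 m2 : is_mu d a m1 -> is_mu d a m2 -> m1 = m2.
Proof.
move=> [[x [x_int [x_neq0 <-]]] min1] [[y [y_int [y_neq0 <-]]] min2].
by apply/le_anti; rewrite min1 ?min2.
Qed.

Definition qminimizes a V :=
  forall x, inOK d x -> x <> qzero -> qtrf d a V <= qtrf d a x.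

Lemma is_mu_qminimizes a V : inOK d V -> V <> qzero -> qminimizes a V ->
  is_mu d a (qtrf d a V).
Proof. by move=> V_int V_neq0 minV; split; first by exists V. Qed.

Lemma qminimizes_conic a c e l m V : a = qadd (qscale l c) (qscale m e) ->
  0 <= l -> 0 <= m -> qminimizes c V -> qminimizes e V -> qminimizes a V.
Proof.
move=> -> l_ge0 m_ge0 minc mine x x_int x_neq0; rewrite !qtrfD.
by apply: lerD; apply: ler_wpM2l => //; [exact: minc | exact: mine].
Qed.

Lemma qminimizes_conj a V : qminimizes a (qconj V) -> qminimizes (qconj a) V.
Proof.
move=> minV x x_int x_neq0; rewrite !qtrf_conj; apply: minV; first exact: inOK_conj.
by move/qconj_eq0.
Qed.

Lemma qdet_coord_inj c e x y x' y' : qdet c e != 0 ->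
  qadd (qscale x c) (qscale y e) = qadd (qscale x' c) (qscale y' e) -> x = x' /\ y = y'.
Proof.
move=> ce_neq0 eq_xy.
have /(congr1 (qdet^~ e)) := eq_xy; have /(congr1 (qdet c)) := eq_xy.
rewrite !qdetDl !qdetDr !qdetxx !mulr0 !add0r !addr0.
by move=> /(mulIf ce_neq0) ? /(mulIf ce_neq0) ?.
Qed.

Lemma qdet_gt0_trans p c e : 0 < p.1 -> 0 < c.1 -> 0 < e.1 ->
  0 < qdet p c -> 0 <= qdet c e -> 0 < qdet p e.
Proof.
move=> p1 c1 e1 pc ce; have := qdet_cycle e p c; rewrite (qdetC e p).
have : 0 < qdet p c * e.1 by exact: mulr_gt0.
have : 0 <= qdet c e * p.1 by exact: mulr_ge0 ce (ltW p1).
nra.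
Qed.

Lemma totposE a : totpos d a <-> 0 < a.1 /\ 0 < qnorm d a.
Proof. by rewrite /totpos /qtr; split=> -[? ?]; split=> //; lra. Qed.

Lemma totpos_fst a : totpos d a -> 0 < a.1.
Proof. by case/totposE. Qed.

Lemma totpos_conj a : totpos d a -> totpos d (qconj a).
Proof. by case=> ? ?; split; rewrite ?qtr_conj ?qnorm_conj. Qed.

Lemma perfect_conj a : perfect d a -> perfect d (qconj a).
Proof.
move=> [a_pos [mu [[[x0 [x0_int [x0_neq0 ax0]]] min_a] perfect_a]]].
split; first exact: totpos_conj.
exists mu; split.
  split.
    exists (qconj x0); split; first exact: inOK_conj.
    by split; [move/qconj_eq0 | rewrite qtrf_conj qconjK].
  move=> x x_int x_neq0; rewrite qtrf_conj; apply: min_a; first exact: inOK_conj.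
  by move/qconj_eq0.
move=> b b_pos b_min; rewrite -[b]qconjK; congr qconj.
apply: perfect_a; first exact: totpos_conj.
move=> v [v_int av]; rewrite qtrf_conj; apply: b_min; split; first exact: inOK_conj.
by rewrite qtrf_conj qconjK.
Qed.

Lemma equiv_hom_mulsq a c w l : isunit d w -> 0 < l ->
  qm a (qsq d w) = qscale l c -> equiv_hom d c a.
Proof.
move=> [w_int [w' [w'_int ww']]] l_gt0 aw2; exists w', l.
split; first by case: (isunit_qmul_one w_int w'_int ww').
by split=> //; rewrite -qmulZl -aw2 -qmulA -qsqM ww' qsq1 qmulq1.
Qed.

End QuadraticField.

(** * Totally positive elements and perfect forms *)

Section TotallyPositive.
Variable d : nat.
Hypothesis d_gt0 : (0 < d)%N.
Local Notation D := (d%:R : rat).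
Local Notation qm := (qmul d).

Lemma D_gt0 : 0 < D. Proof. by rewrite ltr0n. Qed.

Lemma totpos_mul_fst c e : totpos d c -> totpos d e -> 0 < (qm c e).1.
Proof.
case: c e => [c1 c2] [e1 e2] /totposE[/= c1_gt0 Nc] /totposE[/= e1_gt0 Ne].
move: Nc Ne; rewrite /qnorm /qmul /= => Nc Ne.
have D0 := D_gt0.
have lt_sq : (D * (c2 * e2)) ^+ 2 < (c1 * e1) ^+ 2.
  have -> : (D * (c2 * e2)) ^+ 2 = (D * c2 ^+ 2) * (D * e2 ^+ 2) by ring.
  have : 0 <= D * c2 ^+ 2 by nra.
  have : 0 <= D * e2 ^+ 2 by nra.
  nra.
have : 0 < c1 * e1 by exact: mulr_gt0.
nra.
Qed.

Lemma totpos_mul c e : totpos d c -> totpos d e -> totpos d (qm c e).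
Proof.
move=> c_pos e_pos; apply/totposE; split; first exact: totpos_mul_fst.
by rewrite qnormM; apply: mulr_gt0; [case/totposE: c_pos | case/totposE: e_pos].
Qed.

Lemma totpos_add c e : totpos d c -> totpos d e -> totpos d (qadd c e).
Proof.
move=> c_pos e_pos; have ce_pos := totpos_mul_fst c_pos (totpos_conj e_pos).
move/totposE: c_pos => [c1 Nc]; move/totposE: e_pos => [e1 Ne].
apply/totposE; split; first by rewrite /=; lra.
have -> : qnorm d (qadd c e) = qnorm d c + qnorm d e + 2 * (qm c (qconj e)).1 by qf_ring.
lra.
Qed.

Lemma totpos_scale l c : 0 < l -> totpos d c -> totpos d (qscale l c).
Proof.
move=> l_gt0 /totposE[c1 Nc]; apply/totposE; split; first exact: mulr_gt0.
have -> : qnorm d (qscale l c) = l ^+ 2 * qnorm d c by qf_ring.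
by rewrite mulr_gt0 ?exprn_gt0.
Qed.

Lemma totpos_sq u : qnorm d u != 0 -> totpos d (qsq d u).
Proof.
move=> Nu; apply/totposE; split; last by rewrite qnorm_sq exprn_even_gt0.
have D0 := D_gt0; case: u Nu => [u1 u2]; rewrite /qnorm /qsq /qmul /= => Nu.
have [u2_eq0|u2_neq0] := eqVneq u2 0; last by nra.
have u1_neq0 : u1 != 0 by apply: contraNneq Nu => ->; rewrite u2_eq0; lra.
have : 0 < u1 ^+ 2 by rewrite exprn_even_gt0.
by rewrite u2_eq0; lra.
Qed.

Lemma totpos_mulsq a u : totpos d a -> qnorm d u != 0 -> totpos d (qm a (qsq d u)).
Proof. by move=> a_pos Nu; apply: totpos_mul a_pos (totpos_sq Nu). Qed.

Lemma totpos_mul_qpow_sq a u n : totpos d a -> qnorm d u = 1 ->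
  totpos d (qm a (qpow d (qsq d u) n)).
Proof.
move=> a_pos Nu; rewrite -qpow_sq; apply: totpos_mulsq a_pos _.
by rewrite qnorm_pow Nu expr1n oner_neq0.
Qed.

Lemma conic_not_perfect a c e l m V : a = qadd (qscale l c) (qscale m e) ->
  0 < l -> 0 < m -> totpos d c -> totpos d e -> qdet c e != 0 ->
  inOK d V -> V <> qzero -> 0 < qtrf d c V -> 0 < qtrf d e V ->
  qminimizes d c V -> qminimizes d e V -> ~ perfect d a.
Proof.
move=> a_def l_gt0 m_gt0 c_pos e_pos ce_neq0 V_int V_neq0 cV_gt0 eV_gt0 minc mine.
move=> [_ [mu [mu_a perfect_a]]].
have mina := qminimizes_conic a_def (ltW l_gt0) (ltW m_gt0) minc mine.
have mu_def : mu = l * qtrf d c V + m * qtrf d e V.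
  by rewrite (is_mu_unique mu_a (is_mu_qminimizes V_int V_neq0 mina)) a_def qtrfD.
(* A minimal vector of [a] is minimal for [c] and for [e] alike, so the form [b] below, another
   positive combination of [c] and [e] scaled to the minimum [mu], takes the value [mu] on it. *)
pose s := mu / (l * qtrf d c V + 2 * m * qtrf d e V).
have den_gt0 : 0 < l * qtrf d c V + 2 * m * qtrf d e V by nra.
have s_gt0 : 0 < s by apply: divr_gt0 => //; rewrite mu_def; nra.
pose b := qadd (qscale (s * l) c) (qscale (s * (2 * m)) e).
suff b_eq_a : b = a.
  move: b_eq_a; rewrite a_def => /(qdet_coord_inj ce_neq0)[sl_eq sm_eq].
  have s1 : s = 1 by apply: (mulIf (lt0r_neq0 l_gt0)); rewrite mul1r.
  by move: sm_eq; rewrite s1 mul1r; lra.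
apply: perfect_a.
  by apply: totpos_add; apply: totpos_scale => //; apply: mulr_gt0 => //; nra.
move=> v [v_int av_eq].
have v_neq0 : v <> qzero by move=> v0; move: av_eq; rewrite v0 qtrf0 mu_def; nra.
have cv := minc v v_int v_neq0; have ev := mine v v_int v_neq0.
rewrite a_def qtrfD mu_def in av_eq.
have cv_eq : qtrf d c v = qtrf d c V by nra.
have ev_eq : qtrf d e v = qtrf d e V by nra.
by rewrite qtrfD cv_eq ev_eq /s; field; rewrite lt0r_neq0.
Qed.

Lemma qsq_norm1 e : qnorm d e = 1 -> 0 < e.1 * e.2 -> 1 <= (qsq d e).1 /\ 0 < (qsq d e).2.
Proof.
case: e => [e1 e2]; rewrite /qnorm /qsq /qmul /= => Ne e12_gt0; have := D_gt0.
by split; nra.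
Qed.

Lemma qf_eq_qtrf b c y : qtr b = qtr c -> qtrf d b y = qtrf d c y ->
  (qsq d y).2 != 0 -> b = c.
Proof.
case: b c => [b1 b2] [c1 c2]; move: (qsq d y) => [y1 y2].
rewrite /qtr /qmul /= => tr_eq trf_eq y2_neq0.
have b1_eq : b1 = c1 by lra.
congr pair => //; apply: (mulIf (mulf_neq0 (lt0r_neq0 D_gt0) y2_neq0)).
by move: trf_eq; rewrite b1_eq; lra.
Qed.

Lemma qpow_growth E n : qnorm d E = 1 -> 1 <= E.1 -> 0 < E.2 ->
  1 <= (qpow d E n).1 /\ n%:R * E.2 <= (qpow d E n).2.
Proof.
case: E => [e1 e2] /= NE e1_ge1 e2_gt0; have D0 := D_gt0.
elim: n => [|n [IH1 IH2]]; first by rewrite mulr0n mul0r.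
have z2_ge0 : 0 <= (qpow d (e1, e2) n).2 by apply: le_trans _ IH2; rewrite mulr_ge0 ?ler0n ?ltW.
move: IH1 IH2 z2_ge0; rewrite qpowS -natr1; case: (qpow d _ n) => [z1 z2] /= IH1 IH2 z2_ge0.
have : 0 <= D * (e2 * z2) by rewrite (mulr_ge0 (ltW D0)) ?(mulr_ge0 (ltW e2_gt0)).
by split; nra.
Qed.

Lemma qmul_snd_ge0 a z : totpos d a -> qnorm d z = 1 -> 0 < z.1 -> 0 <= z.2 ->
  a.2 ^+ 2 <= z.2 ^+ 2 * qnorm d a -> 0 <= (qm a z).2.
Proof.
case: a z => [a1 a2] [z1 z2] /totposE[/= a1_gt0 Na]; move: Na.
rewrite /qnorm /qmul /= => Na Nz z1_gt0 z2_ge0 big_z2; have D0 := D_gt0.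
have [a2_ge0|a2_lt0] := lerP 0 a2; first by nra.
have z1_sq : z1 ^+ 2 = 1 + D * z2 ^+ 2 by lra.
have sq_le : (a2 * z1) ^+ 2 <= (a1 * z2) ^+ 2 by rewrite !exprMn z1_sq; nra.
have : - (a2 * z1) <= a1 * z2.
  by rewrite -(ler_pXn2r (n := 2)) ?nnegrE ?sqrrN //; nra.
lra.
Qed.

Lemma exists_qpow_snd_ge0 a E : totpos d a -> qnorm d E = 1 -> 1 <= E.1 -> 0 < E.2 ->
  exists n, 0 <= (qm a (qpow d E n)).2.
Proof.
move=> a_pos NE e1_ge1 e2_gt0; have /totposE[_ Na] := a_pos.
pose c := (1 + a.2 ^+ 2 / qnorm d a) / E.2.
have ratio_ge0 : 0 <= a.2 ^+ 2 / qnorm d a by rewrite divr_ge0 ?sqr_ge0 ?ltW.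
have c_ge0 : 0 <= c by apply: divr_ge0; [rewrite addr_ge0 | exact: ltW].
exists (Num.bound c); have [z1_ge1 z2_big] := qpow_growth (Num.bound c) NE e1_ge1 e2_gt0.
apply: qmul_snd_ge0 => //; first by rewrite qnorm_pow NE expr1n.
- by apply: lt_le_trans _ z1_ge1.
- by apply: le_trans _ z2_big; rewrite mulr_ge0 ?ler0n ?ltW.
have c_lt := archi_boundP c_ge0.
have {c_lt} : 1 + a.2 ^+ 2 / qnorm d a < (qpow d E (Num.bound c)).2.
  by apply: lt_le_trans _ z2_big; rewrite -ltr_pdivrMr.
rewrite -ltrBrDl => /ltW; rewrite ler_pdivrMr // => a2_le.
nra.
Qed.

End TotallyPositive.

Section Units.
Variable d : nat.
Hypotheses (d_gt0 : (0 < d)%N)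
  (inOK_mul : forall x y, inOK d x -> inOK d y -> inOK d (qmul d x y)).
Local Notation qm := (qmul d).

Lemma isunit_mul u w : isunit d u -> isunit d w -> isunit d (qm u w).
Proof.
move=> [u_int [u' [u'_int uu']]] [w_int [w' [w'_int ww']]].
split; first exact: inOK_mul.
by exists (qm u' w'); split; [exact: inOK_mul | rewrite qmulACA uu' ww' qmul1q].
Qed.

Lemma isunit_pow u n : isunit d u -> isunit d (qpow d u n).
Proof.
move=> u_unit; elim: n => [|n IH]; last exact: isunit_mul.
by split; [exact: inOK_one | exists qone; split; [exact: inOK_one | exact: qmul1q]].
Qed.

Lemma qminimizes_mulsq a u V : isunit d u ->
  qminimizes d (qm a (qsq d u)) V <-> qminimizes d a (qm u V).
Proof.
move=> [u_int [u' [u'_int uu']]]; have u'u : qm u' u = qone by rewrite qmulC.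
split=> minV x x_int x_neq0.
  rewrite -qtrf_mulsq -(qmul_cancel x uu') -qtrf_mulsq; apply: minV; first exact: inOK_mul.
  by move/(qmul_eq0 u'u).
rewrite !qtrf_mulsq; apply: minV; first exact: inOK_mul.
by move/(qmul_eq0 uu').
Qed.

Lemma perfect_mulsq a w : perfect d a -> isunit d w -> perfect d (qm a (qsq d w)).
Proof.
move=> [a_pos [mu [[[x0 [x0_int [x0_neq0 ax0]]] min_a] perfect_a]]] w_unit.
have [w_int [w' [w'_int ww']]] := w_unit.
have w'w : qm w' w = qone by rewrite qmulC.
have Nw := qnorm_unit_neq0 w_unit.
split; first exact: totpos_mulsq.
exists mu; split.
  split.
    exists (qm w' x0); split; first exact: inOK_mul.
    split; first by move/(qmul_eq0 w'w).
    by rewrite qtrf_mulsq qmul_cancel.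
  move=> x x_int x_neq0; rewrite qtrf_mulsq; apply: min_a; first exact: inOK_mul.
  by move/(qmul_eq0 ww').
move=> b b_pos b_min.
have Nw' : qnorm d w' != 0 by apply: qnorm_unit_neq0; split=> //; exists w.
have -> : b = qm (qm b (qsq d w')) (qsq d w) by rewrite -qmulA -qsqM w'w qsq1 qmulq1.
congr qmul.
apply: perfect_a; first exact: totpos_mulsq.
move=> v [v_int av]; rewrite qtrf_mulsq; apply: b_min; split; first exact: inOK_mul.
by rewrite qtrf_mulsq qmul_cancel.
Qed.

End Units.

(** * Fields of Richaud-Degert type *)

Lemma sqr_addr_subr_absM_ge1 (s q : int) : (s != 0) || (q != 0) ->
  1 <= s ^+ 2 + q ^+ 2 - `|s * q|.
Proof. by case/orP=> ?; nia. Qed.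

Lemma sqr_addr_subr_absM_ge3 (s q : int) : 2 <= `|q| -> 3 <= s ^+ 2 + q ^+ 2 - `|s * q|.
Proof. by move=> ?; nia. Qed.

Section RDForm.
Variables t rho : int.
Hypotheses (rho_neq0 : rho != 0) (rho_le : 2 * `|rho| <= t) (rho_gt : 2 * (1 - rho) <= t).

Definition rd_form (s q : int) : int := t * (s ^+ 2 + q ^+ 2) + 2 * (1 - rho) * s * q.

Lemma rd_form_lb s q : t * (s ^+ 2 + q ^+ 2 - `|s * q|) <= rd_form s q.
Proof. rewrite /rd_form; nia. Qed.

Lemma rd_form_ge s q : (s != 0) || (q != 0) -> t <= rd_form s q.
Proof. by move=> /sqr_addr_subr_absM_ge1 ?; have := rd_form_lb s q; nia. Qed.

Lemma rd_form_gt s q : 2 <= `|q| -> t < rd_form s q.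
Proof. by move=> /(sqr_addr_subr_absM_ge3 s) ?; have := rd_form_lb s q; nia. Qed.

Lemma rd_form_min_unit s q : rd_form s q = t -> `|s ^+ 2 + t * s * q - rho * q ^+ 2| = 1 ->
  `|rho| != 1 -> q = 0 /\ s ^+ 2 = 1.
Proof.
move=> form_eq norm1 rho_neq1; have t_gt0 : 0 < t by lia.
have small : s ^+ 2 + q ^+ 2 - `|s * q| <= 1.
  by have := rd_form_lb s q; rewrite form_eq; nia.
have [q0|q_neq0] := eqVneq q 0.
  by move: norm1; rewrite q0 expr0n /= !mulr0 subr0 addr0 ger0_norm ?sqr_ge0.
exfalso; have [s0|s_neq0] := eqVneq s 0; first by move: norm1; rewrite s0; lia.
have [s1 q1] : `|s| = 1 /\ `|q| = 1 by split; nia.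
have [[sv|sv] [qv|qv]] : (s = 1 \/ s = -1) /\ (q = 1 \/ q = -1) by lia.
all: by move: form_eq norm1; rewrite sv qv /rd_form; lia.
Qed.

End RDForm.

Lemma exists_sign_change (h : nat -> bool) n : h 0 -> ~~ h n -> exists i, h i && ~~ h i.+1.
Proof.
elim: n => [|n IH] h0 hn; first by rewrite h0 in hn.
by case hn': (h n); [exists n; rewrite hn' | apply: IH; rewrite ?hn'].
Qed.

Section RichaudDegert.
Variables (d : nat) (t rho k : int) (b2 : rat).
Local Notation D := (d%:R : rat).
Local Notation T := (t%:~R : rat).
Local Notation P := (rho%:~R : rat).
Local Notation qm := (qmul d).

Definition zbeta (s q : int) : qf := (s%:~R + q%:~R * (T / 2), q%:~R * b2).

Hypotheses (d_gt0 : (0 < d)%N) (b2_gt0 : 0 < b2)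
  (d_eq : D * b2 ^+ 2 = (T / 2) ^+ 2 + P) (t_eq : t = k * rho)
  (rho_le : 2 * `|rho| <= t) (rho_gt : 2 * (1 - rho) <= t)
  (int_basis : forall x, inOK d x -> exists s q, x = zbeta s q).

Lemma t_ge2 : 2 <= t. Proof. lia. Qed.
Lemma rho_neq0 : rho != 0. Proof. by apply/eqP=> rho0; move: t_eq t_ge2; rewrite rho0; lia. Qed.
Lemma k_ge2 : 2 <= `|k|. Proof. by have := rho_neq0; move: rho_le; rewrite t_eq; nia. Qed.
Lemma T_gt0 : 0 < T. Proof. by rewrite ltr0z; have := t_ge2; lia. Qed.

Lemma b2_neq0 : b2 != 0. Proof. exact: lt0r_neq0. Qed.

Lemma D_eq : D = ((T / 2) ^+ 2 + P) / b2 ^+ 2.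
Proof. by rewrite -d_eq mulfK // sqrf_eq0 b2_neq0. Qed.

Ltac zbeta_field := rewrite /zbeta /qmul /qconj /qscale /qtr /qnorm /= ?D_eq;
  try congr pair; field; rewrite ?b2_neq0 //.

Lemma zbetaM s q s' q' : qm (zbeta s q) (zbeta s' q') =
  zbeta (s * s' + q * q' * rho) (s * q' + s' * q + q * q' * t).
Proof. zbeta_field. Qed.
Lemma zbeta_conj s q : qconj (zbeta s q) = zbeta (s + q * t) (- q).
Proof. zbeta_field. Qed.
Lemma qtr_zbeta s q : qtr (zbeta s q) = (2 * s + q * t)%:~R.
Proof. zbeta_field. Qed.
Lemma qnorm_zbeta s q : qnorm d (zbeta s q) = (s ^+ 2 + t * s * q - rho * q ^+ 2)%:~R.
Proof. zbeta_field. Qed.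
Lemma zbeta_one : zbeta 1 0 = qone.
Proof. zbeta_field. Qed.

Lemma inOK_zbeta s q : inOK d (zbeta s q).
Proof. by split; rewrite ?qtr_zbeta ?qnorm_zbeta intr_int. Qed.

Lemma inOK_mul x y : inOK d x -> inOK d y -> inOK d (qm x y).
Proof.
by move=> /int_basis[s [q ->]] /int_basis[s' [q' ->]]; rewrite zbetaM; exact: inOK_zbeta.
Qed.

Definition beta := zbeta 0 1.
Definition eps := zbeta 1 k.
Definition ceps := qconj eps.

Lemma beta_neq0 : beta <> qzero.
Proof. by rewrite /beta /zbeta => -[_ /eqP]; rewrite mulf_eq0 intr_eq0 (negbTE b2_neq0). Qed.

Lemma beta_sq : qsq d beta = qscale P eps.
Proof. rewrite /qsq zbetaM t_eq; zbeta_field. Qed.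

Lemma qnorm_eps : qnorm d eps = 1.
Proof. by rewrite qnorm_zbeta t_eq (_ : _ - _ = 1) //; ring. Qed.

Lemma eps_ceps : qm eps ceps = qone.
Proof. by rewrite qmul_conj qnorm_eps. Qed.

Lemma ceps_eps : qm ceps eps = qone.
Proof. by rewrite qmulC eps_ceps. Qed.

Lemma isunit_eps : isunit d eps.
Proof. exact: (isunit_qmul_one (inOK_zbeta 1 k) (inOK_conj (inOK_zbeta 1 k)) eps_ceps).1. Qed.

Lemma isunit_ceps : isunit d ceps.
Proof. exact: (isunit_qmul_one (inOK_zbeta 1 k) (inOK_conj (inOK_zbeta 1 k)) eps_ceps).2. Qed.

Lemma qsq_eps_pos : 1 <= (qsq d eps).1 /\ 0 < (qsq d eps).2.
Proof.
apply: (qsq_norm1 d_gt0 qnorm_eps); rewrite /eps /zbeta /= mulrA.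
apply: mulr_gt0 => //.
have : 0 < (k * (2 + k * t))%:~R :> rat.
  by rewrite ltr0z; have := k_ge2; have := t_ge2; nia.
rewrite !(intrM, intrD); lra.
Qed.

Lemma disc_neq0 : T ^+ 2 + P * 4 != 0.
Proof.
have -> : T ^+ 2 + P * 4 = 4 * (D * b2 ^+ 2) by rewrite d_eq; field.
by rewrite !mulf_neq0 ?sqrf_eq0 ?b2_neq0 // lt0r_neq0 // ltr0n.
Qed.

Definition N1 : qf := (T / 2, (1 - P - T * (T / 2)) / (2 * D * b2)).
Definition N0 := qconj N1.
Definition N2 := qm N0 (qsq d ceps).
Definition N3 := qm N1 (qsq d ceps).

Lemma qtrf_N1 s q : qtrf d N1 (zbeta s q) = (rd_form t rho s q)%:~R.
Proof.
rewrite /N1 /zbeta /rd_form /qsq /qmul /qtr /= D_eq.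
by field; rewrite b2_neq0 /=; have := disc_neq0; apply: contra_neq => <-; field.
Qed.

Lemma qtrf_N0 s q : qtrf d N0 (zbeta s q) = (rd_form t rho (s + q * t) (- q))%:~R.
Proof. by rewrite qtrf_conj zbeta_conj qtrf_N1. Qed.

Lemma qtrf_N1_ge x : inOK d x -> x <> qzero -> T <= qtrf d N1 x.
Proof.
move=> /int_basis[s [q ->]] x_neq0; rewrite qtrf_N1 ler_int rd_form_ge ?rho_neq0 //.
by rewrite -negb_and; apply/negP => /andP[/eqP s0 /eqP q0]; apply: x_neq0; rewrite s0 q0; zbeta_field.
Qed.

Lemma qminimizes_N1 s q : rd_form t rho s q = t -> qminimizes d N1 (zbeta s q).
Proof. by rewrite /qminimizes qtrf_N1 => ->; exact: qtrf_N1_ge. Qed.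

Lemma qminimizes_N0 s q : rd_form t rho (s + q * t) (- q) = t -> qminimizes d N0 (zbeta s q).
Proof. by move=> form_eq; apply: qminimizes_conj; rewrite zbeta_conj; exact: qminimizes_N1. Qed.

Lemma N1_snd_lt0 : N1.2 < 0.
Proof.
have D0 := D_gt0 d_gt0; have := t_ge2; rewrite -(ler_int rat) => T2.
have := rho_gt; rewrite -(ler_int rat) !(intrM, intrB) => rho_gt'.
rewrite /N1 /= pmulr_llt0 ?invr_gt0 ?mulr_gt0 //; nra.
Qed.

Lemma totpos_N1 : totpos d N1.
Proof.
have D0 := D_gt0 d_gt0; have := t_ge2; rewrite -(ler_int rat) => T2.
have := rho_gt; rewrite -(ler_int rat) !(intrM, intrB) => rho_gt'.
have : 2 * rho <= t by lia.
rewrite -(ler_int rat) intrM => rho_le'; apply/totposE; split; first by rewrite /N1 /=; lra.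
have -> : qnorm d N1 = (T ^+ 2 - (P - 1) ^+ 2) / (4 * D * b2 ^+ 2).
  by rewrite /qnorm /N1 /= D_eq; field; rewrite b2_neq0 disc_neq0.
have num_gt0 : 0 < T ^+ 2 - (P - 1) ^+ 2 by nra.
by apply: divr_gt0 => //; rewrite !mulr_gt0 ?exprn_gt0.
Qed.

Lemma qnorm_ceps : qnorm d ceps = 1.
Proof. by rewrite qnorm_conj qnorm_eps. Qed.

Lemma totpos_N0 : totpos d N0.
Proof. exact: totpos_conj totpos_N1. Qed.

Lemma totpos_N2 : totpos d N2.
Proof. by apply: totpos_mulsq totpos_N0 _; rewrite // qnorm_ceps oner_neq0. Qed.

Lemma totpos_N3 : totpos d N3.
Proof. by apply: totpos_mulsq totpos_N1 _; rewrite // qnorm_ceps oner_neq0. Qed.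

Lemma ceps_zbeta : ceps = zbeta (1 + k * t) (- k).
Proof. by rewrite /ceps zbeta_conj. Qed.

Lemma qtrf_N2 x : qtrf d N2 x = qtrf d N0 (qm ceps x).
Proof. exact: qtrf_mulsq. Qed.

Lemma qtrf_N3 x : qtrf d N3 x = qtrf d N1 (qm ceps x).
Proof. exact: qtrf_mulsq. Qed.

Lemma qminimizes_N1_one : qminimizes d N1 qone.
Proof. by rewrite -zbeta_one; apply: qminimizes_N1; rewrite /rd_form; ring. Qed.

Lemma qminimizes_N1_beta : qminimizes d N1 beta.
Proof. by apply: qminimizes_N1; rewrite /rd_form; ring. Qed.

Lemma qminimizes_N2_beta : qminimizes d N2 beta.
Proof.
apply/(qminimizes_mulsq inOK_mul _ _ isunit_ceps).
by rewrite ceps_zbeta zbetaM; apply: qminimizes_N0; rewrite /rd_form t_eq; ring.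
Qed.

Lemma qminimizes_N2_eps : qminimizes d N2 eps.
Proof.
apply/(qminimizes_mulsq inOK_mul _ _ isunit_ceps).
by rewrite ceps_eps -zbeta_one; apply: qminimizes_N0; rewrite /rd_form; ring.
Qed.

Lemma qminimizes_N3_eps : qminimizes d N3 eps.
Proof.
by apply/(qminimizes_mulsq inOK_mul _ _ isunit_ceps); rewrite ceps_eps; exact: qminimizes_N1_one.
Qed.

Lemma qtr_N1 : qtr N1 = T.
Proof. by rewrite /qtr /N1 /=; field. Qed.

Lemma qtrf_N1_beta : qtrf d N1 beta = T.
Proof. by rewrite qtrf_N1 /rd_form; congr (_%:~R); ring. Qed.

Lemma qtrf_N2_beta : qtrf d N2 beta = T.
Proof. by rewrite qtrf_N2 ceps_zbeta zbetaM qtrf_N0 /rd_form t_eq; congr (_%:~R); ring. Qed.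

Lemma qtrf_N2_eps : qtrf d N2 eps = T.
Proof. by rewrite qtrf_N2 ceps_eps qtrf1 qtr_conj qtr_N1. Qed.

Lemma qtrf_N3_eps : qtrf d N3 eps = T.
Proof. by rewrite qtrf_N3 ceps_eps qtrf1 qtr_N1. Qed.

Lemma qdet_N1_N2_gt0 : 0 < qdet N1 N2.
Proof.
have := qdet_qtrf d N1 N2 eps.
have -> : qtr N2 = qtrf d N1 eps by rewrite -(qtrf1 d) qtrf_N2 qmulq1 qtrf_conj qconjK.
rewrite qtr_N1 qtrf_N2_eps.
have : T < qtrf d N1 eps by rewrite qtrf_N1 ltr_int rd_form_gt ?k_ge2 ?rho_neq0.
have [_ E2_gt0] := qsq_eps_pos; have D0 := D_gt0 d_gt0; have T0 := T_gt0.
move: (qtrf d N1 eps) => G T_lt_G eq_det.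
have : 0 < qdet N1 N2 * (qsq d eps).2 by nra.
by rewrite pmulr_lgt0.
Qed.

Lemma qdet_N2_N3_gt0 : 0 < qdet N2 N3.
Proof.
rewrite qdet_mulsq qnorm_ceps expr1n mul1r /qdet /N0 /N1 /=.
have := N1_snd_lt0; have := T_gt0; rewrite /N1 /=; nra.
Qed.

Lemma qdet_N0_ge0 y : 0 < y.1 -> y.2 <= 0 -> 0 <= qdet N0 y.
Proof. have := N1_snd_lt0; have := T_gt0; rewrite /qdet /N0 /N1 /=; nra. Qed.

Lemma qdet_N1_lt0 y : 0 < y.1 -> 0 <= y.2 -> qdet N1 y < 0.
Proof. have := N1_snd_lt0; have := T_gt0; rewrite /qdet /N1 /=; nra. Qed.

Lemma qdet_N1_mul_qsq_eps y : qdet N1 (qm y (qsq d eps)) = qdet N3 y.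
Proof.
rewrite -[in RHS](mulr1 (qdet N3 y)) -(expr1n _ 2) -qnorm_eps mulrC -qdet_mulsq.
by rewrite /N3 -qmulA -qsqM ceps_eps qsq1 qmulq1.
Qed.

Lemma qdet_N2_mul_qsq_ceps y : qdet N2 (qm y (qsq d ceps)) = qdet N0 y.
Proof. by rewrite qdet_mulsq qnorm_ceps expr1n mul1r. Qed.

Lemma exists_unit_cone a : totpos d a ->
  exists w, [/\ isunit d w, 0 <= qdet N1 (qm a (qsq d w)) & 0 < qdet (qm a (qsq d w)) N3].
Proof.
move=> a_pos; set E := qsq d eps; set E' := qsq d ceps.
have [E1_ge1 E2_gt0] := qsq_eps_pos.
have NE : qnorm d E = 1 by rewrite qnorm_sq qnorm_eps expr1n.
have E'E n : qm (qpow d E' n) (qpow d E n) = qone.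
  by apply: qpow_inv; rewrite -qsqM ceps_eps qsq1.
have [n1 conj_n1] := exists_qpow_snd_ge0 d_gt0 (totpos_conj a_pos) NE E1_ge1 E2_gt0.
have [n2 a_n2] := exists_qpow_snd_ge0 d_gt0 a_pos NE E1_ge1 E2_gt0.
pose c := qm a (qpow d E' n1.+1).
(* [h] holds at [0] and fails at [n1.+1 + n2]; at a sign change, multiplication by [E] carries
   [N3] to [N1]. *)
pose h i := 0 <= qdet N1 (qm c (qpow d E i)).
have h0 : h 0.
  rewrite /h qmulq1; apply/ltW/(qdet_gt0_trans _ _ _ qdet_N1_N2_gt0).
  - exact: totpos_fst totpos_N1.
  - exact: totpos_fst totpos_N2.
  - exact/totpos_fst/totpos_mul_qpow_sq/qnorm_ceps.
  rewrite /c qpowS [qm E' _]qmulC qmulA qdet_N2_mul_qsq_ceps; apply: qdet_N0_ge0.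
    exact/totpos_fst/totpos_mul_qpow_sq/qnorm_ceps.
  have -> : qm a (qpow d E' n1) = qconj (qm (qconj a) (qpow d E n1)).
    by rewrite qconjM qconjK qpow_conj /E qconj_sq.
  by rewrite /= oppr_le0.
have hn : ~~ h (n1.+1 + n2).
  rewrite /h -ltNge /c qpowD qmulA -(qmulA _ a) E'E qmulq1.
  apply: qdet_N1_lt0 a_n2; exact/totpos_fst/totpos_mul_qpow_sq/qnorm_eps.
have [i /andP[hi hi1]] := exists_sign_change h0 hn.
have a_w : qm a (qsq d (qm (qpow d ceps n1.+1) (qpow d eps i))) = qm c (qpow d E i).
  by rewrite qsqM !qpow_sq qmulA.
exists (qm (qpow d ceps n1.+1) (qpow d eps i)); rewrite a_w; split=> //.
  by apply: (isunit_mul inOK_mul); apply: (isunit_pow inOK_mul);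
    [exact: isunit_ceps | exact: isunit_eps].
by move: hi1; rewrite /h -ltNge qpowS [qm E _]qmulC qmulA qdet_N1_mul_qsq_eps qdetC oppr_lt0.
Qed.

Lemma cone_split c : 0 <= qdet N1 c -> 0 < qdet c N3 ->
  (exists l m, [/\ 0 <= l, 0 <= m & c = qadd (qscale l N1) (qscale m N2)]) \/
  (exists l m, [/\ 0 < l, 0 < m & c = qadd (qscale l N2) (qscale m N3)]).
Proof.
move=> N1c cN3; have N12 := qdet_N1_N2_gt0; have N23 := qdet_N2_N3_gt0.
have [cN2|N2c] := lerP 0 (qdet c N2).
  left; exists (qdet c N2 / qdet N1 N2), (qdet N1 c / qdet N1 N2).
  by split; [exact: divr_ge0 (ltW N12) | exact: divr_ge0 (ltW N12) | exact/qdet_coord/lt0r_neq0].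
right; exists (qdet c N3 / qdet N2 N3), (qdet N2 c / qdet N2 N3).
split; [exact: divr_gt0 | | exact/qdet_coord/lt0r_neq0].
by apply: divr_gt0 => //; rewrite qdetC oppr_gt0.
Qed.

Lemma isunit_beta : `|rho| = 1 -> isunit d beta.
Proof.
move=> rho1; have rho_sq : rho * rho = 1 by nia.
apply: (proj1 (isunit_qmul_one (inOK_zbeta 0 1) (inOK_zbeta (- (rho * t)) rho) _)).
by rewrite zbetaM -zbeta_one; congr zbeta; [rewrite mul0r add0r mul1r | ring].
Qed.

Lemma unit_reducible_abs_rho1 : `|rho| = 1 -> unit_reducible d.
Proof.
move=> rho1 a a_pos mu mu_a.
have [w [w_unit N1aw awN3]] := exists_unit_cone a_pos.
have [V [V_unit minV]] : exists V, isunit d V /\ qminimizes d (qm a (qsq d w)) V.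
  case: (cone_split N1aw awN3) => -[l [m [l_ge0 m_ge0 aw_eq]]].
    exists beta; split; first exact: isunit_beta.
    exact: qminimizes_conic aw_eq l_ge0 m_ge0 qminimizes_N1_beta qminimizes_N2_beta.
  exists eps; split; first exact: isunit_eps.
  exact: qminimizes_conic aw_eq (ltW l_ge0) (ltW m_ge0) qminimizes_N2_eps qminimizes_N3_eps.
have wV_unit := isunit_mul inOK_mul w_unit V_unit.
exists (qm w V); split=> //; apply/esym/(is_mu_unique mu_a)/is_mu_qminimizes.
- exact: wV_unit.1.
- exact: isunit_neq0 wV_unit.
- exact/(qminimizes_mulsq inOK_mul _ _ w_unit).
Qed.

Lemma perfect_N1 : perfect d N1.
Proof.
split; first exact: totpos_N1.
exists T; split.
  by rewrite -qtr_N1 -(qtrf1 d); exact: is_mu_qminimizes (inOK_one d) qone_neq0 qminimizes_N1_one.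
move=> b b_pos b_min.
have b_one : qtrf d b qone = T.
  by apply: b_min; split; [exact: inOK_one | rewrite qtrf1 qtr_N1].
have b_beta : qtrf d b beta = T.
  by apply: b_min; split; [exact: inOK_zbeta | exact: qtrf_N1_beta].
apply: (qf_eq_qtrf d_gt0 (y := beta)); first by rewrite -(qtrf1 d) b_one qtr_N1.
  by rewrite b_beta qtrf_N1_beta.
by rewrite beta_sq /= mulf_neq0 ?intr_eq0 ?rho_neq0 // mulf_neq0 ?intr_eq0 ?b2_neq0 //;
  have := k_ge2; apply: contraTneq => ->.
Qed.

Lemma qsq_unit_min_N1 u : isunit d u -> qtrf d N1 u = T -> `|rho| != 1 -> qsq d u = qone.
Proof.
move=> [u_int [v [v_int uv]]] N1u rho_neq1.
have Nu := qnorm_unit u_int v_int uv.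
have [s [q u_eq]] := int_basis u_int.
move: N1u Nu; rewrite u_eq qtrf_N1 qnorm_zbeta => /intr_inj form_eq Nu.
have norm1 : `|s ^+ 2 + t * s * q - rho * q ^+ 2| = 1.
  by apply: (intr_inj (R := rat)); rewrite intr_norm; case: Nu => ->; rewrite ?normrN normr1.
have [-> s_sq] := rd_form_min_unit rho_neq0 rho_le rho_gt form_eq norm1 rho_neq1.
by rewrite /qsq zbetaM -zbeta_one; congr zbeta; [rewrite -s_sq |]; ring.
Qed.

Lemma qtrf_N0_ge x : inOK d x -> x <> qzero -> T <= qtrf d N0 x.
Proof.
move=> x_int x_neq0; rewrite qtrf_conj; apply: qtrf_N1_ge; first exact: inOK_conj.
by move/qconj_eq0.
Qed.

Lemma not_equiv_hom_N1_N0 : `|rho| != 1 -> ~ equiv_hom d N1 N0.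
Proof.
move=> rho_neq1 [u [lam [u_unit [lam_gt0 N0_eq]]]].
have N0_val x : qtrf d N0 x = lam * qtrf d N1 (qm u x) by rewrite N0_eq qtrfZ qtrf_mulsq.
have [u_int [u' [u'_int uu']]] := u_unit.
have [_ u'_unit] := isunit_qmul_one u_int u'_int uu'.
have := N0_val qone; rewrite qmulq1 qtrf1 qtr_conj qtr_N1 => T_eq.
have := qtrf_N0_ge u'_int (isunit_neq0 u'_unit); rewrite N0_val uu' qtrf1 qtr_N1 => T_le.
have := qtrf_N1_ge u_int (isunit_neq0 u_unit) => N1u_ge.
have T0 := T_gt0; have lam1 : lam = 1 by nra.
have N1u : qtrf d N1 u = T by rewrite T_eq lam1 mul1r.
move: N0_eq; rewrite lam1 (qsq_unit_min_N1 u_unit N1u rho_neq1) qmulq1.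
move=> /(congr1 snd) /=; rewrite mul1r => N1_eq.
by have := N1_snd_lt0; rewrite /N1 /=; lra.
Qed.

Lemma perfect_equiv_hom_N1_N0 a : `|rho| != 1 -> perfect d a ->
  equiv_hom d N1 a \/ equiv_hom d N0 a.
Proof.
move=> rho_neq1 a_perf; have [w [w_unit N1aw awN3]] := exists_unit_cone a_perf.1.
have aw_perf := perfect_mulsq d_gt0 inOK_mul a_perf w_unit.
have T0 := T_gt0.
case: (cone_split N1aw awN3) => -[l [m [l_ge0 m_ge0 aw_eq]]]; last first.
  case: (conic_not_perfect d_gt0 aw_eq l_ge0 m_ge0 totpos_N2 totpos_N3
    (lt0r_neq0 qdet_N2_N3_gt0) (inOK_zbeta 1 k) (isunit_neq0 isunit_eps) _ _
    qminimizes_N2_eps qminimizes_N3_eps aw_perf);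
  by rewrite ?qtrf_N2_eps ?qtrf_N3_eps.
have aw_neq0 : ~ (l = 0 /\ m = 0).
  by case=> l0 m0; case: aw_perf => -[]; rewrite aw_eq l0 m0 /qtr /=; lra.
have [m0|m_neq0] := eqVneq m 0.
  left; apply: (equiv_hom_mulsq w_unit (l := l)); last by rewrite aw_eq m0 qadd_scale0r.
  by rewrite lt_def l_ge0 andbT; apply/eqP => l0; apply: aw_neq0.
have m_gt0 : 0 < m by rewrite lt_def m_neq0.
have [l0|l_neq0] := eqVneq l 0.
  right; apply: (equiv_hom_mulsq (isunit_mul inOK_mul w_unit isunit_eps) m_gt0).
  by rewrite qsqM qmulA aw_eq l0 qadd_scale0l qmulZl /N2 -qmulA -qsqM ceps_eps qsq1 qmulq1.
have l_gt0 : 0 < l by rewrite lt_def l_neq0.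
case: (conic_not_perfect d_gt0 aw_eq l_gt0 m_gt0 totpos_N1 totpos_N2
  (lt0r_neq0 qdet_N1_N2_gt0) (inOK_zbeta 0 1) beta_neq0 _ _
  qminimizes_N1_beta qminimizes_N2_beta aw_perf);
by rewrite ?qtrf_N1_beta ?qtrf_N2_beta.
Qed.

Lemma nK_eq2_not_unit_reducible : ~ unit_reducible d -> nK_eq2 d.
Proof.
move=> not_ur; have [rho1|rho_neq1] := eqVneq `|rho| 1.
  by case: not_ur; exact: unit_reducible_abs_rho1.
exists N1, N0; split; first exact: perfect_N1.
split; first exact: perfect_conj perfect_N1.
split; first exact: not_equiv_hom_N1_N0.
by move=> a; exact: perfect_equiv_hom_N1_N0.
Qed.

End RichaudDegert.

(** * Integral bases *)

Section RingOfIntegers.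
Variable d : nat.
Hypothesis d_sqfree : forall p : nat, prime p -> ~~ (p * p %| d)%N.

Lemma sqrfree_mul_sqr_int (y : rat) : d%:R * y ^+ 2 \is a Num.int -> y \is a Num.int.
Proof.
move=> /intrP[z dy]; have y_eq := divq_num_den y.
set n := numq y in y_eq; set e := denq y in y_eq.
have e_gt0 : 0 < e := denq_gt0 y.
have e_neq0 : (e%:~R : rat) != 0 by rewrite intr_eq0 lt0r_neq0.
have int_eq : d%:Z * n ^+ 2 = z * e ^+ 2.
  apply: (intr_inj (R := rat)); rewrite !expr2 !intrM -!expr2 -dy -{1}y_eq.
  by field.
have nat_eq : (d * `|n|%N ^ 2 = `|z|%N * `|e|%N ^ 2)%N.
  by have := congr1 absz int_eq; rewrite !abszM /= !expnS !expn0 !muln1.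
have e2_dvd : (`|e|%N ^ 2 %| d)%N.
  have cop : coprime (`|e|%N ^ 2) (`|n|%N ^ 2).
    by rewrite coprime_pexpl // coprime_pexpr // coprime_sym coprime_num_den.
  by rewrite -(Gauss_dvdl d cop) nat_eq dvdn_mull.
have e1 : `|e|%N = 1%N.
  apply/eqP; rewrite eqn_leq absz_gt0 lt0r_neq0 // andbT leqNgt; apply/negP => e_gt1.
  have p_prime := pdiv_prime e_gt1.
  move/negP: (d_sqfree p_prime); apply; apply: dvdn_trans e2_dvd.
  by rewrite expnS expn1 dvdn_mul ?pdiv_dvd.
by rewrite -y_eq (_ : e = 1) ?divr1 ?intr_int //; lia.
Qed.

Lemma inOK_halves x : inOK d x ->
  exists A B N : int, x = (A%:~R / 2, B%:~R / 2) /\ A ^+ 2 - d%:Z * B ^+ 2 = 4 * N.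
Proof.
move=> [/intrP[A trA] /intrP[N normN]].
have /intrP[B twice_x2] : 2 * x.2 \is a Num.int.
  apply: sqrfree_mul_sqr_int; rewrite (_ : _ * _ = (A ^+ 2 - 4 * N)%:~R) ?intr_int //.
  by rewrite intrB !intrM -!expr2 -trA -normN /qtr /qnorm; ring.
exists A, B, N; split.
  by case: x trA twice_x2 {normN} => x1 x2; rewrite /qtr /= => <- <-; congr pair; field.
apply: (intr_inj (R := rat)); rewrite intrB !intrM -!expr2 -trA -twice_x2 -normN.
by rewrite /qtr /qnorm; ring.
Qed.

Lemma int_basis_mod4_23 (m : int) : (d %% 4 == 2)%N || (d %% 4 == 3)%N ->
  forall x, inOK d x -> exists s q, x = zbeta (2 * m) 1 s q.
Proof.
move=> d_mod x /inOK_halves[A [B [N [-> AB_eq]]]].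
have [a [al [A_eq al01]]] : exists a al : int, A = 2 * a + al /\ (al = 0 \/ al = 1).
  by exists (A %/ 2)%Z, (A %% 2)%Z; lia.
have [b [be [B_eq be01]]] : exists b be : int, B = 2 * b + be /\ (be = 0 \/ be = 1).
  by exists (B %/ 2)%Z, (B %% 2)%Z; lia.
have [e [f [d_eq f23]]] : exists e f : int, d%:Z = 4 * e + f /\ (f = 2 \/ f = 3).
  by exists (d %/ 4)%N, (d %% 4)%N; lia.
have [al0 be0] : al = 0 /\ be = 0.
  by move: AB_eq; rewrite A_eq B_eq d_eq; case: al01 => ->; case: be01 => ->; case: f23 => ->; lia.
exists (a - b * m), b.
by rewrite /zbeta A_eq B_eq al0 be0 !addr0 !intrM; congr pair; field.
Qed.

Lemma int_basis_mod4_1 (m : int) : (d %% 4 == 1)%N -> odd `|m|%N ->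
  forall x, inOK d x -> exists s q, x = zbeta m (1 / 2) s q.
Proof.
move=> d_mod m_odd x /inOK_halves[A [B [N [-> AB_eq]]]].
have [a [al [A_eq al01]]] : exists a al : int, A = 2 * a + al /\ (al = 0 \/ al = 1).
  by exists (A %/ 2)%Z, (A %% 2)%Z; lia.
have [b [be [B_eq be01]]] : exists b be : int, B = 2 * b + be /\ (be = 0 \/ be = 1).
  by exists (B %/ 2)%Z, (B %% 2)%Z; lia.
have [e d_eq] : exists e : int, d%:Z = 4 * e + 1 by exists (d %/ 4)%N; lia.
have [c m_eq] : exists c : int, m = 2 * c + 1.
  have m_mod2 : (`|m| %% 2 = 1)%N by rewrite modn2 m_odd.
  by exists (m %/ 2)%Z; lia.
have al_be : al = be.
  by move: AB_eq; rewrite A_eq B_eq d_eq; case: al01 => ->; case: be01 => ->; lia.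
exists (a - m * b - al * c), B.
by rewrite /zbeta A_eq B_eq -al_be m_eq; congr pair; field.
Qed.

End RingOfIntegers.

Lemma divisor_mod4_23 (d : nat) (m r : int) : d%:Z = m ^+ 2 + r -> (r %| 4 * m)%Z ->
  (d %% 4 == 2)%N || (d %% 4 == 3)%N -> exists k, 2 * m = k * r.
Proof.
move=> d_eq /dvdzP[k m_eq] d_mod.
have [j [k_eq|k_eq]] : exists j, k = 2 * j \/ k = 2 * j + 1 by exists (k %/ 2)%Z; lia.
  by exists j; nia.
(* An odd quotient [4 * m / r] forces [4 %| r], and then [d = m ^+ 2] modulo 4. *)
exfalso.
have [r1 r_eq] : exists r1, r = 2 * r1 by exists (2 * m - j * r); nia.
have [r2 r1_eq] : exists r2, r1 = 2 * r2 by exists (m - j * r1); nia.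
have [c [g [m_eq' g01]]] : exists c g : int, m = 2 * c + g /\ (g = 0 \/ g = 1).
  by exists (m %/ 2)%Z, (m %% 2)%Z; lia.
have : d%:Z = 4 * (c ^+ 2 + c * g + r2) + g.
  by rewrite d_eq r_eq r1_eq m_eq'; case: g01 => ->; ring.
lia.
Qed.

Lemma divisor_mod4_1 (d : nat) (m r : int) : d%:Z = m ^+ 2 + r -> (r %| 4 * m)%Z ->
  (d %% 4 == 1)%N -> odd `|m|%N -> exists rho k, r = 4 * rho /\ m = k * rho.
Proof.
move=> d_eq /dvdzP[k m_eq] d_mod m_odd.
have m_mod2 : (`|m| %% 2 = 1)%N by rewrite modn2 m_odd.
have [c m_eq'] : exists c, m = 2 * c + 1 by exists (m %/ 2)%Z; lia.
have [e d_eq'] : exists e : int, d%:Z = 4 * e + 1 by exists (d %/ 4)%N; lia.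
exists (e - c ^+ 2 - c), k.
have r_eq : r = 4 * (e - c ^+ 2 - c) by move: d_eq; rewrite d_eq' m_eq'; lia.
by split=> //; move: m_eq; rewrite r_eq; lia.
Qed.

Theorem theorem2 (d : nat) (m r : int) :
  (1 < d)%N ->
  (forall p : nat, prime p -> ~~ (p * p %| d)%N) ->
  (d%:Z = m ^+ 2 + r) ->
  0 < m -> - m < r -> r <= m ->
  (r %| 4 * m)%Z ->
  ((d %% 4 == 2)%N || (d %% 4 == 3)%N || ((d %% 4 == 1)%N && odd `|m|%N)) ->
  ~ unit_reducible d ->
  nK_eq2 d.
Proof.
move=> d_gt1 d_sqfree d_eq m_gt0 r_gt r_le r_dvd d_mod not_ur.
have d_gt0 : (0 < d)%N by exact: ltnW.
have d_rat : (d%:R : rat) = m%:~R ^+ 2 + r%:~R.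
  by move/(congr1 (fun z : int => z%:~R : rat)): d_eq; rewrite intrD !intrM -expr2.
case/orP: d_mod => [d_mod | /andP[d_mod m_odd]].
  have [k m_eq] := divisor_mod4_23 d_eq r_dvd d_mod.
  apply: (nK_eq2_not_unit_reducible (b2 := 1) d_gt0 ltr01 _ m_eq _ _ _ not_ur).
  - by rewrite d_rat intrM; field.
  - lia.
  - lia.
  - exact: int_basis_mod4_23.
have [rho [k [r_eq m_eq]]] := divisor_mod4_1 d_eq r_dvd d_mod m_odd.
have rho_neq0 : rho != 0 by apply: contraTneq m_gt0 => rho0; rewrite m_eq rho0 mulr0.
apply: (nK_eq2_not_unit_reducible (b2 := 1 / 2) d_gt0 _ _ m_eq _ _ _ not_ur) => //.
- by rewrite d_rat r_eq intrM; field.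
- lia.
- lia.
- exact: int_basis_mod4_1.
Qed.
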